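(* Suppose $U=\{(u,v,x): (u,x)\in V,\ v\in\mathbb{R}\}$ with $V$ a connected open set. Let $X = X_1 n + X_2\ell+\sum_i X_i m_i$ be a Killing vector field of $g$ on $U$ that is nowhere spacelike, i.e. $g(X,X)\le 0$ at every point of $U$ (for all values of $v$). Then: - $X_1$ is a constant $c$; - $X = c\,n + F_2\,\ell + \sum_i F_i\, m_i$, where $F_2,F_i$ are functions of $(u,x^3,\dots,x^N)$ only; - $2cF_2 + \sum_i F_i^2 \le 0$ on $V$.
   Context: Work on an open set $U$ with coordinates $(u,v,x^3,\dots,x^N)$, $N\ge 3$. The Lorentzian metric is $$g = 2\,du\,\big(dv + H\,du + \hat W_e\,dx^e\big) + g_{ef}\,dx^e dx^f,$$ where the indices $e,f$ run over $3,\dots,N$ and are summed. The functions $H,\hat W_e,g_{ef}$ depend only on $(u,x^3,\dots,x^N)$, not on $v$, and $(g_{ef})$ is positive definite. Then $\ell=\partial_v$ is a covariantly constant null vector. Choose functions $m^i_{\ e}(u,x)$, $i,e\in\{3,\dots,N\}$, with $g_{ef}=\sum_i m^i_{\ e}m^i_{\ f}$, and let $m_i^{\ e}$ be the inverse matrix, so that $\sum_e m^i_{\ e}m_j^{\ e}=\delta_{ij}$. The coframe is $m^1 = dv + H\,du+\hat W_e\,dx^e$, $m^2=du$, $m^i = m^i_{\ e}dx^e$, so that $g = 2m^1m^2+\sum_i (m^i)^2$. The dual frame vectors are $$\ell=\partial_v,\qquad n=\partial_u - H\,\partial_v,\qquad m_i = m_i^{\ e}\big(\partial_e-\hat W_e\,\partial_v\big).$$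 For a vector field $X$ we write $X = X_1 n + X_2\ell+\sum_i X_i m_i$. Equivalently $X_1=g(X,\ell)$, $X_2=g(X,n)$, $X_i=g(X,m_i)$, and $g(X,X)=2X_1X_2+\sum_i X_i^2$. *)

From mathcomp Require Import all_boot.
From Stdlib Require Import Reals.
Set Implicit Arguments.
Unset Strict Implicit.
Open Scope R_scope.

(* n = N - 2 transverse coordinates x^3..x^N, indexed by 'I_n. *)
Inductive coord (n : nat) : Type := Cu | Cv | Cx (e : 'I_n).
Arguments Cu {n}.
Arguments Cv {n}.
Arguments Cx {n} e.

Definition coord_eqb (n : nat) (a b : coord n) : bool :=
  match a, b with
  | Cu, Cu => true
  | Cv, Cv => true
  | Cx e, Cx f => e == f
  | _, _ => false
  end.

Definition point (n : nat) := coord n -> R.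

Definition upd (n : nat) (p : point n) (a : coord n) (t : R) : point n :=
  fun b => if coord_eqb a b then t else p b.

Definition has_partial (n : nat) (f : point n -> R) (a : coord n) (p : point n) (l : R)
  : Prop := derivable_pt_lim (fun t => f (upd p a t)) (p a) l.

Definition xsum (n : nat) (F : 'I_n -> R) : R := \big[Rplus/0]_(e < n) F e.
Definition csum (n : nat) (F : coord n -> R) : R := F Cu + F Cv + xsum (fun e => F (Cx e)).

Definition open_set (n : nat) (S : point n -> Prop) : Prop :=
  forall p, S p -> exists eps, 0 < eps /\
    forall q, (forall a, Rabs (q a - p a) < eps) -> S q.

Definition continuous_on (n : nat) (S : point n -> Prop) (f : point n -> R) : Prop :=
  forall p, S p -> forall eps, 0 < eps -> exists delta, 0 < delta /\
    forall q, (forall a, Rabs (q a - p a) < delta) -> Rabs (f q - f p) < eps.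

(* C^infinity on S: f is continuous on S, all first partial derivatives exist
   on S, and they are again C^infinity on S. *)
CoInductive smooth_on (n : nat) (S : point n -> Prop) (f : point n -> R) : Prop :=
  Smooth_on : continuous_on S f ->
    (forall a, exists df : point n -> R,
        (forall p, S p -> has_partial f a p (df p)) /\ smooth_on S df) ->
    smooth_on S f.

Definition open_set_ux (n : nat) (V : R -> ('I_n -> R) -> Prop) : Prop :=
  forall u x, V u x -> exists eps, 0 < eps /\
    forall u' x', Rabs (u' - u) < eps -> (forall e, Rabs (x' e - x e) < eps) -> V u' x'.

Definition connected_ux (n : nat) (V : R -> ('I_n -> R) -> Prop) : Prop :=
  forall A B : R -> ('I_n -> R) -> Prop,
    open_set_ux A -> open_set_ux B ->
    (forall u x, V u x -> A u x \/ B u x) ->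
    (forall u x, V u x -> A u x -> B u x -> False) ->
    (forall u x, V u x -> A u x) \/ (forall u x, V u x -> B u x).

Definition xof (n : nat) (p : point n) : 'I_n -> R := fun e => p (Cx e).
Definition lift_ux (n : nat) (f : R -> ('I_n -> R) -> R) : point n -> R :=
  fun p => f (p Cu) (xof p).

Definition Uof (n : nat) (V : R -> ('I_n -> R) -> Prop) : point n -> Prop :=
  fun p => V (p Cu) (xof p).

(* Metric components g_ab of
   g = 2 du (dv + H du + W_e dx^e) + g_ef dx^e dx^f. *)
Definition gcomp (n : nat) (H : R -> ('I_n -> R) -> R) (W : 'I_n -> R -> ('I_n -> R) -> R)
  (gm : 'I_n -> 'I_n -> R -> ('I_n -> R) -> R) (a b : coord n) (p : point n) : R :=
  match a, b with
  | Cu, Cu => 2 * H (p Cu) (xof p)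
  | Cu, Cv | Cv, Cu => 1
  | Cv, Cv => 0
  | Cu, Cx e | Cx e, Cu => W e (p Cu) (xof p)
  | Cv, Cx _ | Cx _, Cv => 0
  | Cx e, Cx f => gm e f (p Cu) (xof p)
  end.

Definition gval (n : nat) (H : R -> ('I_n -> R) -> R) (W : 'I_n -> R -> ('I_n -> R) -> R)
  (gm : 'I_n -> 'I_n -> R -> ('I_n -> R) -> R) (p : point n) (Y Z : coord n -> R) : R :=
  csum (fun a => csum (fun b => gcomp H W gm a b p * Y a * Z b)).

(* Frame vectors, as coordinate components:
   l = d_v,  n = d_u - H d_v,  m_i = m_i^e (d_e - W_e d_v). *)
Definition lvec (n : nat) : coord n -> R :=
  fun a => match a with Cv => 1 | _ => 0 end.
Definition nvec (n : nat) (H : R -> ('I_n -> R) -> R) (p : point n) : coord n -> R :=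
  fun a => match a with Cu => 1 | Cv => - H (p Cu) (xof p) | Cx _ => 0 end.
Definition mvec (n : nat) (W : 'I_n -> R -> ('I_n -> R) -> R)
  (minv : 'I_n -> 'I_n -> R -> ('I_n -> R) -> R) (i : 'I_n) (p : point n)
  : coord n -> R :=
  fun a => match a with
           | Cu => 0
           | Cv => - xsum (fun e => minv i e (p Cu) (xof p) * W e (p Cu) (xof p))
           | Cx e => minv i e (p Cu) (xof p)
           end.

(* Killing equation (L_X g)_{ab} = X^c d_c g_ab + g_cb d_a X^c + g_ac d_b X^c = 0
   at every point of S. *)
Definition killing_on (n : nat) (S : point n -> Prop)
  (gc : coord n -> coord n -> point n -> R) (X : coord n -> point n -> R) : Prop :=
  forall p, S p -> exists (DX : coord n -> coord n -> R) (Dg : coord n -> coord n -> coord n -> R),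
    (forall a c, has_partial (X c) a p (DX a c)) /\
    (forall c a b, has_partial (gc a b) c p (Dg c a b)) /\
    (forall a b, csum (fun c => X c p * Dg c a b + gc c b p * DX a c + gc a c p * DX b c) = 0).

(* The v-row of the Killing equations, (L_X g)_{vb} = 0, involves no derivative
   of the metric because g_{vb} is constant.  It gives d_v X^u = 0 and expresses
   d_v X through dX^u and the metric at (u, x).  As X^u, hence dX^u, does not
   depend on v, d_v X is constant along each v-line: X is affine in v.  Asking
   g(X + s d_vX, X + s d_vX) <= 0 for every s kills the transverse part of d_vX
   and gives X^u d_v X^v = 0, where d_v X^v = - d_u X^u.  So X^u dX^u = 0: the
   function (X^u)^2 is constant on the connected set U, hence so is X^u = c, and
   then d_v X = 0.  Finally X is expanded in the null frame (n, l, m_i) with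
   coefficients read off at v = 0, and g(X, X) = 2 c F_2 + sum_i F_i^2 <= 0. *)

Set Warnings "-notation-overridden -redundant-canonical-projection".
From HB Require Import structures.
From mathcomp Require Import all_boot.
From Stdlib Require Import Reals Lra Psatz Classical FunctionalExtensionality.
From Stdlib Require List.
Open Scope R_scope.
Set Implicit Arguments.
Unset Strict Implicit.

Lemma Rplus_associative : associative Rplus.
Proof. by move=> x y z; rewrite Rplus_assoc. Qed.

HB.instance Definition _ :=
  Monoid.isComLaw.Build R 0 Rplus Rplus_associative Rplus_comm Rplus_0_l.

Section FiniteSums.
Variable n : nat.
Implicit Types (F G : 'I_n -> R).

Lemma xsum_ext F G : (forall e, F e = G e) -> xsum F = xsum G.
Proof. by move=> h; apply: eq_bigr => e _; exact: h. Qed.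

Lemma xsum_eq0 F : (forall e, F e = 0) -> xsum F = 0.
Proof. by move=> h; rewrite /xsum big1. Qed.

Lemma xsum_add F G : xsum (fun e => F e + G e) = xsum F + xsum G.
Proof. by rewrite /xsum big_split. Qed.

Lemma xsum_scal (a : R) F : xsum (fun e => a * F e) = a * xsum F.
Proof.
apply: (big_rec2 (fun y1 y2 => y1 = a * y2)); first by ring.
by move=> i y1 y2 _ ->; ring.
Qed.

Lemma xsum_scalr (a : R) F : xsum (fun e => F e * a) = xsum F * a.
Proof. by rewrite Rmult_comm -xsum_scal; apply: xsum_ext => e; ring. Qed.

Lemma xsum_sub F G : xsum (fun e => F e - G e) = xsum F - xsum G.
Proof.
rewrite (@xsum_ext _ (fun e => F e + (-1) * G e)); last by move=> e; ring.
by rewrite xsum_add xsum_scal; ring.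
Qed.

Lemma xsum_swap (F : 'I_n -> 'I_n -> R) :
  xsum (fun e => xsum (fun f => F e f)) = xsum (fun f => xsum (fun e => F e f)).
Proof. exact: exchange_big. Qed.

Lemma xsum_quadratic (F A B C : 'I_n -> R) s s2 :
  (forall e, F e = A e + s * B e + s2 * C e) ->
  xsum F = xsum A + s * xsum B + s2 * xsum C.
Proof. by move=> h; rewrite (xsum_ext h) !xsum_add !xsum_scal. Qed.

Lemma xsum_delta F j : xsum (fun i => F i * (if j == i then 1 else 0)) = F j.
Proof.
rewrite /xsum (bigD1 j) //= eqxx big1 ?Rmult_1_r ?Rplus_0_r //.
by move=> i hi; rewrite eq_sym (negbTE hi) Rmult_0_r.
Qed.

End FiniteSums.

Definition posdef (n : nat) (G : 'I_n -> 'I_n -> R) : Prop :=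
  forall y : 'I_n -> R, (exists e, y e <> 0) ->
    0 < xsum (fun e => xsum (fun f => G e f * y e * y f)).

Section PositiveDefinite.
Variables (n : nat) (G : 'I_n -> 'I_n -> R).
Hypothesis hG : posdef G.

Lemma posdef_nonpos_zero (z : 'I_n -> R) :
  xsum (fun e => xsum (fun f => G e f * z e * z f)) <= 0 -> forall e, z e = 0.
Proof.
move=> hz e; apply: NNPP => ne; have := hG (ex_intro _ e ne); lra.
Qed.

Lemma posdef_kernel (z : 'I_n -> R) :
  (forall e, xsum (fun f => G f e * z f) = 0) -> forall e, z e = 0.
Proof.
move=> hz; apply: posdef_nonpos_zero; rewrite xsum_swap xsum_eq0; first exact: Rle_refl.
move=> f.
by rewrite -[RHS](Rmult_0_l (z f)) -(hz f) -xsum_scalr; apply: xsum_ext => e; ring.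
Qed.

End PositiveDefinite.

Lemma gram_quadform n (M : 'I_n -> 'I_n -> R) (z : 'I_n -> R) :
  xsum (fun e => xsum (fun f => xsum (fun i => M i e * M i f) * z e * z f)) =
  xsum (fun i => (xsum (fun e => M i e * z e)) ^ 2).
Proof.
transitivity (xsum (fun e => xsum (fun i => xsum (fun f => M i e * z e * (M i f * z f))))).
  apply: xsum_ext => e; rewrite xsum_swap; apply: xsum_ext => f.
  by rewrite -!xsum_scalr; apply: xsum_ext => i; ring.
rewrite xsum_swap; apply: xsum_ext => i.
rewrite /= Rmult_1_r -xsum_scalr; apply: xsum_ext => e.
by rewrite xsum_scal.
Qed.

(* If M^T M is positive definite (so M is injective) and M N^T = 1, then also
   N^T M = 1: a square matrix with a right inverse has it as a left inverse. *)
Lemma gram_right_inverse_left n (M N : 'I_n -> 'I_n -> R) :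
  posdef (fun e f => xsum (fun i => M i e * M i f)) ->
  (forall i j, xsum (fun e => M i e * N j e) = if i == j then 1 else 0) ->
  forall (z : 'I_n -> R) f, xsum (fun i => xsum (fun e => M i e * z e) * N i f) = z f.
Proof.
move=> hpos hinv z f; apply: Rminus_diag_uniq; move: f.
pose Nz i := xsum (fun e => M i e * z e).
pose w f := xsum (fun i => Nz i * N i f) - z f.
have Mw : forall j, xsum (fun f => M j f * w f) = 0.
  move=> j; rewrite (@xsum_ext _ _ (fun f => xsum (fun i => M j f * (Nz i * N i f)) - M j f * z f));
    last by move=> f; rewrite /w xsum_scal; ring.
  rewrite xsum_sub xsum_swap (@xsum_ext _ _ (fun i => Nz i * (if j == i then 1 else 0))).
    by rewrite xsum_delta /Nz; ring.
  by move=> i; rewrite -(hinv j i) -xsum_scal; apply: xsum_ext => f; ring.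
apply: (posdef_kernel hpos (z := w)) => e.
rewrite (@xsum_ext _ _ (fun f => xsum (fun i => M i e * (M i f * w f)))); last first.
  by move=> f; rewrite -xsum_scalr; apply: xsum_ext => i; ring.
by rewrite xsum_swap xsum_eq0 // => i; rewrite xsum_scal Mw Rmult_0_r.
Qed.

Lemma quadratic_nonpos (A B C : R) :
  (forall t, A + B * t + C * (t * t) <= 0) -> C <= 0 /\ (C = 0 -> B = 0).
Proof.
move=> h; have hA := Rle_abs (- A); rewrite Rabs_Ropp in hA.
have hA0 := Rabs_pos A.
split.
- apply: Rnot_lt_le => hC.
  set t := sqrt ((Rabs A + 1) / C).
  have htt : C * (t * t) = Rabs A + 1.
    rewrite /t sqrt_sqrt; first by field; lra.
    by apply: Rlt_le; apply: Rdiv_lt_0_compat; lra.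
  have := h t; have := h (- t).
  have -> : - t * - t = t * t by ring.
  lra.
- move=> hC; subst C; apply: NNPP => hB.
  have := h ((Rabs A + 1) / B).
  have -> : B * ((Rabs A + 1) / B) = Rabs A + 1 by field.
  lra.
Qed.

Lemma derivable_pt_lim_local (f g : R -> R) x l eps : 0 < eps ->
  (forall s, Rabs (s - x) < eps -> f s = g s) ->
  derivable_pt_lim f x l -> derivable_pt_lim g x l.
Proof.
move=> he hfg hf eps' heps'.
have [d hd] := hf eps' heps'.
have hm : 0 < Rmin d eps by apply: Rmin_pos => //; apply: cond_pos.
exists (mkposreal _ hm) => h hh0 hh /=.
have h1 : Rabs h < d by apply: (Rlt_le_trans _ _ _ hh); apply: Rmin_l.
have h2 : Rabs h < eps by apply: (Rlt_le_trans _ _ _ hh); apply: Rmin_r.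
rewrite -!hfg; first exact: hd.
- by rewrite Rminus_diag Rabs_R0.
- by replace (x + h - x) with h by ring.
Qed.

Lemma derivable_pt_lim_local_unique (f g : R -> R) x l1 l2 eps : 0 < eps ->
  (forall s, Rabs (s - x) < eps -> f s = g s) ->
  derivable_pt_lim f x l1 -> derivable_pt_lim g x l2 -> l1 = l2.
Proof.
move=> he hfg h1 h2; apply: (uniqueness_limite g x) => //.
exact: (derivable_pt_lim_local he hfg h1).
Qed.

Lemma null_derivative_interval (f : R -> R) c eps :
  (forall t, Rabs (t - c) < eps -> derivable_pt_lim f t 0) ->
  forall a b, Rabs (a - c) < eps -> Rabs (b - c) < eps -> f a = f b.
Proof.
move=> hd.
suff key : forall a b, a <= b -> Rabs (a - c) < eps -> Rabs (b - c) < eps -> f a = f b.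
  move=> a b ha hb; case: (Rle_lt_dec a b) => hab; first exact: key.
  by symmetry; apply: key => //; lra.
move=> a b hab ha hb.
have inI : forall x, a <= x <= b -> Rabs (x - c) < eps.
  by move=> x hx; move: ha hb; rewrite /Rabs; do 3 case: Rcase_abs; lra.
pose pr x (P : a < x < b) := exist (fun l => derivable_pt_abs f x l) 0
  (hd x (inI x (conj (Rlt_le _ _ (proj1 P)) (Rlt_le _ _ (proj2 P))))).
symmetry; apply: (@null_derivative_loc f a b pr) => //; last by lra.
by move=> x hx; apply: derivable_continuous_pt; exists 0; exact: hd _ (inI x hx).
Qed.

Lemma null_derivative_line (f : R -> R) :
  (forall t, derivable_pt_lim f t 0) -> forall a b, f a = f b.
Proof.
move=> hd a b; apply: (@null_derivative_interval f a (Rabs (b - a) + 1)) => //.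
- by rewrite Rminus_diag Rabs_R0; move: (Rabs_pos (b - a)); lra.
- lra.
Qed.

Lemma constant_derivative_line (f : R -> R) c :
  (forall t, derivable_pt_lim f t c) -> forall t t0, f t = f t0 + (t - t0) * c.
Proof.
move=> hd t t0.
have hg : forall t, derivable_pt_lim (fun t => f t - c * t) t 0.
  move=> x; have := derivable_pt_lim_minus f (mult_real_fct c id) x c (c * 1) (hd x)
    (derivable_pt_lim_scal id c x 1 (derivable_pt_lim_id x)).
  by rewrite Rmult_1_r Rminus_diag.
by have := null_derivative_line hg t t0 => /= h; lra.
Qed.

Lemma coord_eqb_refl n (a : coord n) : coord_eqb a a.
Proof. by case: a => //= e; rewrite eqxx. Qed.

Lemma coord_eqb_eq n (a b : coord n) : coord_eqb a b -> a = b.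
Proof. by case: a; case: b => //= e f /eqP ->. Qed.

Lemma upd_same n (p : point n) a t : upd p a t a = t.
Proof. by rewrite /upd coord_eqb_refl. Qed.

Lemma upd_other n (p : point n) a b t : a <> b -> upd p a t b = p b.
Proof.
move=> ne; rewrite /upd; case E: (coord_eqb a b) => //.
by case: ne; apply: coord_eqb_eq.
Qed.

Lemma upd_upd n (p : point n) a s t : upd (upd p a s) a t = upd p a t.
Proof.
by apply: functional_extensionality => b; rewrite /upd; case: (coord_eqb a b).
Qed.

Lemma upd_id n (p : point n) a : upd p a (p a) = p.
Proof.
apply: functional_extensionality => b; rewrite /upd.
by case E: (coord_eqb a b) => //; rewrite (coord_eqb_eq E).
Qed.

Lemma upd_comm n (p : point n) a b s t :
  a <> b -> upd (upd p a s) b t = upd (upd p b t) a s.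
Proof.
move=> ne; apply: functional_extensionality => c; rewrite /upd.
case E1: (coord_eqb a c); case E2: (coord_eqb b c) => //.
by case: ne; rewrite (coord_eqb_eq E1) (coord_eqb_eq E2).
Qed.

Lemma partial_on_line n (f : point n -> R) a p t d :
  has_partial f a (upd p a t) d -> derivable_pt_lim (fun s => f (upd p a s)) t d.
Proof.
rewrite /has_partial upd_same.
have -> : (fun s => f (upd (upd p a t) a s)) = (fun s => f (upd p a s)) by
  apply: functional_extensionality => s; rewrite upd_upd.
done.
Qed.

Definition mkpt n (u : R) (x : 'I_n -> R) : point n :=
  fun a => match a with Cu => u | Cv => 0 | Cx e => x e end.

Lemma mkpt_upd n (p : point n) : mkpt (p Cu) (xof p) = upd p Cv 0.
Proof. by apply: functional_extensionality => -[| |e]. Qed.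

Definition box n (p : point n) (eps : R) (q : point n) : Prop :=
  forall a, Rabs (q a - p a) < eps.

Lemma box_center n (p : point n) eps : 0 < eps -> box p eps p.
Proof. by move=> he a; rewrite Rminus_diag Rabs_R0. Qed.

Lemma box_upd n (p s : point n) eps a t :
  box p eps s -> Rabs (t - p a) < eps -> box p eps (upd s a t).
Proof.
move=> hs ht b; rewrite /upd; case E: (coord_eqb a b); last exact: hs.
by rewrite -(coord_eqb_eq E).
Qed.

Lemma Uof_open n (V : R -> ('I_n -> R) -> Prop) : open_set_ux V ->
  forall p, Uof V p -> exists eps, 0 < eps /\ forall q, box p eps q -> Uof V q.
Proof.
move=> hV p hp; have [eps [he hVe]] := hV _ _ hp.
by exists eps; split => // q hq; apply: hVe; [exact: hq | move=> e; exact: hq].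
Qed.

Lemma partial_of_constant n (V : R -> ('I_n -> R) -> Prop) (f : point n -> R) c :
  open_set_ux V -> (forall q, Uof V q -> f q = c) ->
  forall p a d, Uof V p -> has_partial f a p d -> d = 0.
Proof.
move=> hV hc p a d hp h; have [eps [he hU]] := Uof_open hV hp.
symmetry; apply: (@derivable_pt_lim_local_unique (fun _ => c) (fun s => f (upd p a s))
  (p a) 0 d eps he) => //; last exact: derivable_pt_lim_const.
by move=> s hs; symmetry; apply: hc; apply: hU; apply: box_upd => //; exact: box_center.
Qed.

(* Copying them one at a time moves along coordinate lines inside a box
   around p, on which f is constant when its partials vanish. *)
Fixpoint copy_coords n (q : point n) (L : list (coord n)) (r : point n) : point n :=
  match L with
  | nil => r
  | a :: L' => upd (copy_coords q L' r) a (q a)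
  end.

Lemma copy_coords_spec n (S : point n -> Prop) (f : point n -> R) p eps q :
  (forall r, box p eps r -> S r) ->
  (forall r, S r -> forall a, has_partial f a r 0) ->
  box p eps q ->
  forall L r, box p eps r ->
    [/\ box p eps (copy_coords q L r), f (copy_coords q L r) = f r
      & forall b, List.In b L -> copy_coords q L r b = q b].
Proof.
move=> hS hd hq; elim => [|a L IH] r hr //=.
have [h1 h2 h3] := IH r hr.
split; first exact: box_upd.
- rewrite -h2 -{2}(upd_id (copy_coords q L r) a).
  apply: (@null_derivative_interval (fun t => f (upd (copy_coords q L r) a t)) (p a) eps).
  + by move=> t ht; apply: partial_on_line; apply: hd; apply: hS; exact: box_upd.
  + exact: hq.
  + exact: h1.
- move=> b [<-|hb]; first exact: upd_same.
  rewrite /upd; case E: (coord_eqb a b); first by rewrite (coord_eqb_eq E).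
  exact: h3.
Qed.

Definition all_coords n : list (coord n) := Cu :: Cv :: List.map Cx (enum 'I_n).

Lemma in_all_coords n (b : coord n) : List.In b (all_coords n).
Proof.
case: b => [| |e]; rewrite /all_coords /=; [by left | by right; left | right; right].
apply: List.in_map; have : e \in enum 'I_n by rewrite mem_enum.
elim: (enum 'I_n) => //= y s IH; rewrite in_cons => /orP [/eqP ->|h];
  [by left | right; exact: IH].
Qed.

Lemma box_constant n (S : point n -> Prop) (f : point n -> R) p eps :
  (forall r, box p eps r -> S r) ->
  (forall r, S r -> forall a, has_partial f a r 0) ->
  forall q, box p eps q -> f q = f p.
Proof.
move=> hS hd q hq.
have he : 0 < eps by have := hq Cu; have := Rabs_pos (q Cu - p Cu); lra.
have [_ h2 h3] := copy_coords_spec hS hd hq (all_coords n) (box_center p he).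
rewrite -h2; congr f; apply: functional_extensionality => b.
by rewrite h3 //; apply: in_all_coords.
Qed.

(* On U = V x R with V open and connected, a function with zero partial
   derivatives is constant: it is v-independent, and the set where its value
   on the slice v = 0 equals a given one is open, as is its complement. *)
Lemma zero_gradient_constant n (V : R -> ('I_n -> R) -> Prop) (f : point n -> R) :
  open_set_ux V -> connected_ux V ->
  (forall p, Uof V p -> forall a, has_partial f a p 0) ->
  exists k, forall p, Uof V p -> f p = k.
Proof.
move=> hVo hVc hd.
have on_slice : forall p, Uof V p -> f p = f (mkpt (p Cu) (xof p)).
  move=> p hp; rewrite mkpt_upd -{1}(upd_id p Cv).
  apply: (@null_derivative_line (fun t => f (upd p Cv t))) => t.
  by apply: partial_on_line; apply: hd; exact: hp.
have near : forall u x, V u x -> exists eps, 0 < eps /\ forall u' x',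
    Rabs (u' - u) < eps -> (forall e, Rabs (x' e - x e) < eps) ->
    V u' x' /\ f (mkpt u' x') = f (mkpt u x).
  move=> u x hux; have [eps [he hU]] := Uof_open hVo (p := mkpt u x) hux.
  exists eps; split => // u' x' hu hx.
  have hb : box (mkpt u x) eps (mkpt u' x').
    by case => [| |e] //=; rewrite Rminus_diag Rabs_R0.
  by split; [exact: (hU _ hb) | apply: (box_constant hU _ hb) => r hr a; exact: hd].
have [[u0 [x0 h0]]|empty] := classic (exists u x, V u x); last first.
  by exists 0 => p hp; case: empty; exists (p Cu), (xof p).
pose k := f (mkpt u0 x0); exists k.
have open_level : forall P : R -> Prop, open_set_ux (fun u x => V u x /\ P (f (mkpt u x))).
  move=> P u x [hux hk]; have [eps [he hnear]] := near u x hux.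
  exists eps; split => // u' x' hu hx; have [hV' ->] := hnear u' x' hu hx.
  by split.
have [hA|hB] : (forall u x, V u x -> V u x /\ f (mkpt u x) = k) \/
                (forall u x, V u x -> V u x /\ f (mkpt u x) <> k).
  apply: hVc; [exact: (open_level (fun y => y = k)) | exact: (open_level (fun y => y <> k))
              | | by move=> u x _ [_ h1] [_ h2]].
  by move=> u x hux; case: (classic (f (mkpt u x) = k)) => ?; [left | right].
- by move=> p hp; rewrite on_slice //; case: (hA _ _ hp).
- by case: (hB _ _ h0).
Qed.

Section Metric.
Variables (n : nat) (H : R -> ('I_n -> R) -> R) (W : 'I_n -> R -> ('I_n -> R) -> R)
  (gm : 'I_n -> 'I_n -> R -> ('I_n -> R) -> R).
Implicit Types (p : point n) (Y Z : coord n -> R).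

Lemma gval_expand p Y Z :
  gval H W gm p Y Z =
  2 * H (p Cu) (xof p) * Y Cu * Z Cu + Y Cu * Z Cv + Y Cv * Z Cu
  + xsum (fun e => W e (p Cu) (xof p) * (Y Cu * Z (Cx e) + Y (Cx e) * Z Cu))
  + xsum (fun e => xsum (fun f => gm e f (p Cu) (xof p) * Y (Cx e) * Z (Cx f))).
Proof.
rewrite /gval /csum /=.
have e1 : xsum (fun e : 'I_n => 0 * Y Cv * Z (Cx e)) = 0.
  by apply: xsum_eq0 => e; ring.
have e2 : xsum (fun e => W e (p Cu) (xof p) * Y (Cx e) * Z Cu + 0 * Y (Cx e) * Z Cv +
     xsum (fun f => gm e f (p Cu) (xof p) * Y (Cx e) * Z (Cx f))) =
  xsum (fun e => W e (p Cu) (xof p) * Y (Cx e) * Z Cu) +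
  xsum (fun e => xsum (fun f => gm e f (p Cu) (xof p) * Y (Cx e) * Z (Cx f))).
  by rewrite -xsum_add; apply: xsum_ext => e; ring.
have e3 : xsum (fun e => W e (p Cu) (xof p) * (Y Cu * Z (Cx e) + Y (Cx e) * Z Cu)) =
  xsum (fun e => W e (p Cu) (xof p) * Y Cu * Z (Cx e)) +
  xsum (fun e => W e (p Cu) (xof p) * Y (Cx e) * Z Cu).
  by rewrite -xsum_add; apply: xsum_ext => e; ring.
by rewrite e1 e2 e3; ring.
Qed.

Lemma gval_lvec p Z : gval H W gm p Z (@lvec n) = Z Cu.
Proof.
rewrite gval_expand /= (@xsum_eq0 _ (fun e => _ * (_ * 0 + _ * 0))); last by move=> e; ring.
by rewrite xsum_eq0 => [|e]; [ring | apply: xsum_eq0 => f; ring].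
Qed.

Lemma gval_line p (U Y : coord n -> R) s :
  gval H W gm p (fun a => U a + s * Y a) (fun a => U a + s * Y a) =
  gval H W gm p U U + s * (gval H W gm p U Y + gval H W gm p Y U)
  + (s * s) * gval H W gm p Y Y.
Proof.
rewrite !gval_expand.
have eW : xsum (fun e => W e (p Cu) (xof p) *
   ((U Cu + s * Y Cu) * (U (Cx e) + s * Y (Cx e)) + (U (Cx e) + s * Y (Cx e)) * (U Cu + s * Y Cu))) =
  xsum (fun e => W e (p Cu) (xof p) * (U Cu * U (Cx e) + U (Cx e) * U Cu))
  + s * (xsum (fun e => W e (p Cu) (xof p) * (U Cu * Y (Cx e) + U (Cx e) * Y Cu))
        + xsum (fun e => W e (p Cu) (xof p) * (Y Cu * U (Cx e) + Y (Cx e) * U Cu)))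
  + (s * s) * xsum (fun e => W e (p Cu) (xof p) * (Y Cu * Y (Cx e) + Y (Cx e) * Y Cu)).
  by rewrite -xsum_add; apply: xsum_quadratic => e; ring.
have eg : xsum (fun e => xsum (fun f => gm e f (p Cu) (xof p) *
     (U (Cx e) + s * Y (Cx e)) * (U (Cx f) + s * Y (Cx f)))) =
  xsum (fun e => xsum (fun f => gm e f (p Cu) (xof p) * U (Cx e) * U (Cx f)))
  + s * (xsum (fun e => xsum (fun f => gm e f (p Cu) (xof p) * U (Cx e) * Y (Cx f)))
        + xsum (fun e => xsum (fun f => gm e f (p Cu) (xof p) * Y (Cx e) * U (Cx f))))
  + (s * s) * xsum (fun e => xsum (fun f => gm e f (p Cu) (xof p) * Y (Cx e) * Y (Cx f))).
  rewrite -xsum_add; apply: xsum_quadratic => e /=.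
  by rewrite -xsum_add; apply: xsum_quadratic => f; ring.
by rewrite eW eg; ring.
Qed.

Lemma gval_transverse p Y : Y Cu = 0 ->
  gval H W gm p Y Y = xsum (fun e => xsum (fun f => gm e f (p Cu) (xof p) * Y (Cx e) * Y (Cx f))).
Proof.
move=> hu; rewrite gval_expand hu.
by rewrite (@xsum_eq0 _ (fun e => _ * (0 * _ + _ * 0))) => [|e]; ring.
Qed.

Lemma gval_vertical p U Y : Y Cu = 0 -> (forall e, Y (Cx e) = 0) ->
  gval H W gm p U Y + gval H W gm p Y U = 2 * U Cu * Y Cv.
Proof.
move=> hu hx; rewrite !gval_expand hu.
have -> : xsum (fun e => W e (p Cu) (xof p) * (U Cu * Y (Cx e) + U (Cx e) * 0)) = 0.
  by apply: xsum_eq0 => e; rewrite hx; ring.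
have -> : xsum (fun e => W e (p Cu) (xof p) * (0 * U (Cx e) + Y (Cx e) * U Cu)) = 0.
  by apply: xsum_eq0 => e; rewrite hx; ring.
have -> : xsum (fun e => xsum (fun f => gm e f (p Cu) (xof p) * U (Cx e) * Y (Cx f))) = 0.
  by apply: xsum_eq0 => e; apply: xsum_eq0 => f; rewrite hx; ring.
have -> : xsum (fun e => xsum (fun f => gm e f (p Cu) (xof p) * Y (Cx e) * U (Cx f))) = 0.
  by apply: xsum_eq0 => e; apply: xsum_eq0 => f; rewrite hx; ring.
ring.
Qed.

(* Components of a vector Z in the null frame (n, l, m_i): Z = Z_1 n + Z_2 l
   + sum_i Z_i m_i with Z_1 = Z^u, Z_2 = lcoeff and Z_i = mcoeff i. *)
Definition lcoeff p Z : R :=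
  Z Cv + Z Cu * H (p Cu) (xof p) + xsum (fun e => W e (p Cu) (xof p) * Z (Cx e)).

Definition mcoeff (m : 'I_n -> 'I_n -> R -> ('I_n -> R) -> R) (i : 'I_n) p Z : R :=
  xsum (fun e => m i e (p Cu) (xof p) * Z (Cx e)).

Variables (m minv : 'I_n -> 'I_n -> R -> ('I_n -> R) -> R).

Lemma gval_frame p Z :
  (forall e f, gm e f (p Cu) (xof p) = xsum (fun i => m i e (p Cu) (xof p) * m i f (p Cu) (xof p))) ->
  gval H W gm p Z Z = 2 * Z Cu * lcoeff p Z + xsum (fun i => mcoeff m i p Z ^ 2).
Proof.
move=> hgm.
have eg : xsum (fun e => xsum (fun f => gm e f (p Cu) (xof p) * Z (Cx e) * Z (Cx f))) =
  xsum (fun e => xsum (fun f => xsum (fun i => m i e (p Cu) (xof p) * m i f (p Cu) (xof p))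
                                * Z (Cx e) * Z (Cx f))).
  by apply: xsum_ext => e; apply: xsum_ext => f; rewrite hgm.
have eW : xsum (fun e => W e (p Cu) (xof p) * (Z Cu * Z (Cx e) + Z (Cx e) * Z Cu)) =
  2 * Z Cu * xsum (fun e => W e (p Cu) (xof p) * Z (Cx e)).
  by rewrite -xsum_scal; apply: xsum_ext => e; ring.
by rewrite gval_expand eg gram_quadform eW /lcoeff /mcoeff; ring.
Qed.

Lemma frame_decomposition p Z :
  posdef (fun e f => gm e f (p Cu) (xof p)) ->
  (forall e f, gm e f (p Cu) (xof p) = xsum (fun i => m i e (p Cu) (xof p) * m i f (p Cu) (xof p))) ->
  (forall i j, xsum (fun e => m i e (p Cu) (xof p) * minv j e (p Cu) (xof p)) = if i == j then 1 else 0) ->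
  forall a, Z a = Z Cu * nvec H p a + lcoeff p Z * @lvec n a
                  + xsum (fun i => mcoeff m i p Z * mvec W minv i p a).
Proof.
move=> hpos hgm hinv.
have hpos' : posdef (fun e f => xsum (fun i => m i e (p Cu) (xof p) * m i f (p Cu) (xof p))).
  move=> y hy; apply: (Rlt_le_trans _ _ _ (hpos y hy)); right.
  by apply: xsum_ext => e; apply: xsum_ext => f; rewrite hgm.
have coords := gram_right_inverse_left hpos' hinv (fun e => Z (Cx e)).
have hv : xsum (fun i => mcoeff m i p Z * - xsum (fun e => minv i e (p Cu) (xof p) * W e (p Cu) (xof p)))
          = - xsum (fun e => W e (p Cu) (xof p) * Z (Cx e)).
  transitivity ((-1) * xsum (fun i => xsum (fun e =>
                  mcoeff m i p Z * minv i e (p Cu) (xof p) * W e (p Cu) (xof p)))).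
    rewrite -xsum_scal; apply: xsum_ext => i.
    have -> : xsum (fun e => mcoeff m i p Z * minv i e (p Cu) (xof p) * W e (p Cu) (xof p)) =
              mcoeff m i p Z * xsum (fun e => minv i e (p Cu) (xof p) * W e (p Cu) (xof p)).
      by rewrite -xsum_scal; apply: xsum_ext => e; ring.
    ring.
  rewrite xsum_swap.
  suff -> : xsum (fun e => xsum (fun i =>
                 mcoeff m i p Z * minv i e (p Cu) (xof p) * W e (p Cu) (xof p)))
            = xsum (fun e => W e (p Cu) (xof p) * Z (Cx e)) by ring.
  by apply: xsum_ext => e; rewrite xsum_scalr coords; ring.
case=> [| |e] /=.
- by rewrite xsum_eq0 => [|i]; ring.
- by rewrite hv /lcoeff; ring.
- by rewrite coords; ring.
Qed.

End Metric.

(* The v-row of the Killing equations, (L_X g)_{vb} = 0.  Since g_{vb} is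
   constant (g_vu = 1, g_vv = g_ve = 0), it only involves first derivatives
   DX a c = d_a X^c of X and the metric at (u, x). *)
Definition v_row n (W : 'I_n -> R -> ('I_n -> R) -> R)
  (gm : 'I_n -> 'I_n -> R -> ('I_n -> R) -> R) (p : point n)
  (DX : coord n -> coord n -> R) : Prop :=
  [/\ DX Cv Cu = 0,
      forall e, xsum (fun f => gm f e (p Cu) (xof p) * DX Cv (Cx f)) + DX (Cx e) Cu = 0
    & DX Cv Cv + xsum (fun f => W f (p Cu) (xof p) * DX Cv (Cx f)) + DX Cu Cu = 0].

Lemma killing_v_row n H W gm (X : coord n -> point n -> R) p DX Dg :
  (forall c a b, has_partial (gcomp H W gm a b) c p (Dg c a b)) ->
  (forall a b, csum (fun c => X c p * Dg c a b + gcomp H W gm c b p * DX a c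
                              + gcomp H W gm a c p * DX b c) = 0) ->
  v_row W gm p DX.
Proof.
move=> hDg hK.
have Dg0 : forall c b, Dg c Cv b = 0.
  move=> c b; have := hDg c Cv b; rewrite /has_partial.
  by case: b => [| |e] /= h; symmetry;
    apply: (uniqueness_limite _ _ _ _ (derivable_pt_lim_const _ (p c)) h).
have hv := hK Cv Cv; have hx := fun e => hK Cv (Cx e); have hu := hK Cv Cu.
rewrite /csum /= in hv hx hu.
have k1 : DX Cv Cu = 0.
  by rewrite xsum_eq0 ?Dg0 in hv => [|e]; [lra | rewrite Dg0; ring].
split => //.
- move=> e; have := hx e; rewrite !Dg0 k1.
  rewrite (@xsum_ext _ _ (fun f => gm f e (p Cu) (xof p) * DX Cv (Cx f))); first lra.
  by move=> f /=; rewrite Dg0; ring.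
- move: hu; rewrite !Dg0 k1.
  rewrite (@xsum_ext _ _ (fun f => W f (p Cu) (xof p) * DX Cv (Cx f))); first lra.
  by move=> f /=; rewrite Dg0; ring.
Qed.

(* The v-row determines the v-derivatives d_v X from the derivatives of X^u,
   because the transverse metric is nondegenerate. *)
Lemma v_row_unique n W gm (p : point n) DX DX' :
  posdef (fun e f => gm e f (p Cu) (xof p)) ->
  v_row W gm p DX -> v_row W gm p DX' ->
  DX Cu Cu = DX' Cu Cu -> (forall e, DX (Cx e) Cu = DX' (Cx e) Cu) ->
  forall b, DX Cv b = DX' Cv b.
Proof.
move=> hpos [u1 x1 v1] [u2 x2 v2] eu ex.
have ef : forall f, DX Cv (Cx f) = DX' Cv (Cx f).
  move=> f; apply: Rminus_diag_uniq; move: f.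
  apply: (posdef_kernel hpos (z := fun f => DX Cv (Cx f) - DX' Cv (Cx f))) => e.
  have -> : xsum (fun f => gm f e (p Cu) (xof p) * (DX Cv (Cx f) - DX' Cv (Cx f))) =
            xsum (fun f => gm f e (p Cu) (xof p) * DX Cv (Cx f))
            - xsum (fun f => gm f e (p Cu) (xof p) * DX' Cv (Cx f)).
    by rewrite -xsum_sub; apply: xsum_ext => f; ring.
  by have := x1 e; have := x2 e; rewrite ex; lra.
have eW : xsum (fun f => W f (p Cu) (xof p) * DX Cv (Cx f)) =
          xsum (fun f => W f (p Cu) (xof p) * DX' Cv (Cx f)).
  by apply: xsum_ext => f; rewrite ef.
by case=> [| |e]; [rewrite u1 u2 | lra | exact: ef].
Qed.

Section NowhereSpacelikeKillingField.
Variables (n : nat) (V : R -> ('I_n -> R) -> Prop) (H : R -> ('I_n -> R) -> R)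
  (W : 'I_n -> R -> ('I_n -> R) -> R) (gm : 'I_n -> 'I_n -> R -> ('I_n -> R) -> R)
  (X : coord n -> point n -> R).
Hypothesis hVopen : open_set_ux V.
Hypothesis hgpos : forall u x, V u x -> posdef (fun e f => gm e f u x).
Hypothesis hKilling : killing_on (Uof V) (gcomp H W gm) X.
Hypothesis hcausal :
  forall p, Uof V p -> gval H W gm p (fun a => X a p) (fun a => X a p) <= 0.

Lemma killing_partials p : Uof V p ->
  exists DX, (forall a c, has_partial (X c) a p (DX a c)) /\ v_row W gm p DX.
Proof.
move=> hp; have [DX [Dg [hd [hDg hK]]]] := hKilling hp.
by exists DX; split => //; exact: killing_v_row hDg hK.
Qed.

(* d_v X^u = 0, so X^u does not depend on v ... *)
Lemma Xu_v_invariant q t : Uof V q -> X Cu (upd q Cv t) = X Cu q.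
Proof.
move=> hq; rewrite -{2}(upd_id q Cv).
apply: (@null_derivative_line (fun s => X Cu (upd q Cv s))) => s.
have [DX [hd [hvu _ _]]] := killing_partials (p := upd q Cv s) hq.
by rewrite -hvu; apply: partial_on_line; exact: hd.
Qed.

Lemma Xu_partial_v_invariant q a t d1 d2 : Uof V q -> a <> Cv ->
  has_partial (X Cu) a q d1 -> has_partial (X Cu) a (upd q Cv t) d2 -> d1 = d2.
Proof.
move=> hq ha h1 h2; have [eps [he hU]] := Uof_open hVopen hq.
apply: (@derivable_pt_lim_local_unique (fun s => X Cu (upd q a s))
          (fun s => X Cu (upd (upd q Cv t) a s)) (q a) d1 d2 eps he) => //.
- move=> s hs; rewrite upd_comm; last by move=> E; apply: ha.
  by rewrite Xu_v_invariant //; apply: hU; apply: box_upd => //; exact: box_center.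
- by move: h2; rewrite /has_partial upd_other // => E; apply: ha.
Qed.

(* Hence d_v X, which the v-row determines from dX^u, is constant along each
   v-line: X is affine in v. *)
Lemma X_affine_in_v p DX : Uof V p ->
  (forall a c, has_partial (X c) a p (DX a c)) -> v_row W gm p DX ->
  forall t a, X a (upd p Cv t) = X a p + (t - p Cv) * DX Cv a.
Proof.
move=> hp hd hrow t a.
suff hline : forall s, derivable_pt_lim (fun s => X a (upd p Cv s)) s (DX Cv a).
  by rewrite (constant_derivative_line hline t (p Cv)) /= upd_id.
move=> s; have [DX' [hd' hrow']] := killing_partials (p := upd p Cv s) hp.
have -> : DX Cv a = DX' Cv a.
  apply: (v_row_unique (hgpos hp) hrow hrow').
  - by apply: (Xu_partial_v_invariant hp _ (hd _ _) (hd' _ _)).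
  - by move=> e; apply: (Xu_partial_v_invariant hp _ (hd _ _) (hd' _ _)).
by apply: partial_on_line; exact: hd'.
Qed.

(* Causality along the v-line: g(X + s d_vX, X + s d_vX) <= 0 for every s
   forces the transverse part of d_vX to vanish and X^u d_v X^v = 0. *)
Lemma causal_v_slope p DX : Uof V p ->
  (forall a c, has_partial (X c) a p (DX a c)) -> v_row W gm p DX ->
  (forall f, DX Cv (Cx f) = 0) /\ X Cu p * DX Cu Cu = 0.
Proof.
move=> hp hd hrow; have [hvu _ hvv] := hrow.
pose U0 := fun a => X a p; pose Y := DX Cv.
have hline : forall s, gval H W gm p U0 U0 + (gval H W gm p U0 Y + gval H W gm p Y U0) * s
                       + gval H W gm p Y Y * (s * s) <= 0.
  move=> s; have := hcausal (p := upd p Cv (s + p Cv)) hp.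
  have -> : (fun a => X a (upd p Cv (s + p Cv))) = (fun a => U0 a + s * Y a).
    by apply: functional_extensionality => a; rewrite (X_affine_in_v hp hd hrow) /U0 /Y; ring.
  have -> : gval H W gm (upd p Cv (s + p Cv)) = gval H W gm p by [].
  by rewrite gval_line; lra.
have [hC hB] := quadratic_nonpos hline.
have Y0 : forall f, DX Cv (Cx f) = 0.
  apply: (posdef_nonpos_zero (hgpos hp) (z := fun f => Y (Cx f))).
  by rewrite -(@gval_transverse n H W gm p Y hvu).
have C0 : gval H W gm p Y Y = 0.
  rewrite (@gval_transverse n H W gm p Y hvu); apply: xsum_eq0 => e; apply: xsum_eq0 => f.
  by rewrite /Y Y0; ring.
have BY : gval H W gm p U0 Y + gval H W gm p Y U0 = 2 * X Cu p * DX Cv Cv.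
  exact: gval_vertical.
have Yv : DX Cv Cv = - DX Cu Cu.
  by move: hvv; rewrite xsum_eq0 => [|f]; [lra | rewrite Y0; ring].
split => //; have := hB C0; rewrite BY Yv; lra.
Qed.

(* Consequently X^u dX^u = 0, i.e. (X^u)^2 has zero gradient. *)
Lemma Xu_gradient p DX : Uof V p ->
  (forall a c, has_partial (X c) a p (DX a c)) -> v_row W gm p DX ->
  forall a, X Cu p * DX a Cu = 0.
Proof.
move=> hp hd hrow; have [hvu hxu _] := hrow.
have [Y0 huu] := causal_v_slope hp hd hrow.
case=> [| |e] //; first by rewrite hvu; ring.
move: (hxu e); rewrite xsum_eq0 => [h|f]; last by rewrite Y0; ring.
have -> : DX (Cx e) Cu = 0 by lra.
by ring.
Qed.

Hypothesis hVconn : connected_ux V.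

(* X_1 = X^u is constant: (X^u)^2 is constant on the connected set U, and if
   it is nonzero then X^u itself has zero gradient. *)
Lemma Xu_constant : exists c, forall q, Uof V q -> X Cu q = c.
Proof.
have [k hk] : exists k, forall p, Uof V p -> X Cu p * X Cu p = k.
  apply: (zero_gradient_constant hVopen hVconn) => p hp a.
  have [DX [hd hrow]] := killing_partials hp.
  have := derivable_pt_lim_mult _ _ _ _ _ (hd a Cu) (hd a Cu).
  by rewrite upd_id (Rmult_comm (DX a Cu)) (Xu_gradient hp hd hrow) Rplus_0_r.
have [k0|knz] := Req_dec k 0.
  by exists 0 => q hq; have := hk q hq; rewrite k0 => h; nra.
apply: (zero_gradient_constant hVopen hVconn) => p hp a.
have [DX [hd hrow]] := killing_partials hp.
have hne : X Cu p <> 0 by move=> h0; apply: knz; rewrite -(hk p hp) h0; ring.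
have := Xu_gradient hp hd hrow a => /Rmult_integral [//|h0].
by rewrite -h0; exact: hd.
Qed.

(* With X^u constant, d_v X = 0 and X does not depend on v. *)
Lemma X_v_invariant p a t : Uof V p -> X a (upd p Cv t) = X a p.
Proof.
move=> hp; have [c hc] := Xu_constant.
have [DX [hd hrow]] := killing_partials hp; have [_ _ hvv] := hrow.
have huu : DX Cu Cu = 0 := partial_of_constant hVopen hc hp (hd Cu Cu).
have [Y0 _] := causal_v_slope hp hd hrow.
suff hz : DX Cv a = 0 by rewrite (X_affine_in_v hp hd hrow) hz; ring.
case: a => [| |f]; [by case: hrow | | exact: Y0].
by move: hvv; rewrite huu xsum_eq0 => [|f]; [lra | rewrite Y0; ring].
Qed.

End NowhereSpacelikeKillingField.

(* F_2 and F_i are the null-frame coefficients of X on the slice v = 0. *)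
Theorem mainTheorem4
  (n : nat) (hn : (1 <= n)%nat)
  (V : R -> ('I_n -> R) -> Prop)
  (hVopen : open_set_ux V) (hVconn : connected_ux V)
  (H : R -> ('I_n -> R) -> R)
  (W : 'I_n -> R -> ('I_n -> R) -> R)
  (gm : 'I_n -> 'I_n -> R -> ('I_n -> R) -> R)
  (m : 'I_n -> 'I_n -> R -> ('I_n -> R) -> R)
  (minv : 'I_n -> 'I_n -> R -> ('I_n -> R) -> R)
  (hH : smooth_on (Uof V) (lift_ux H))
  (hW : forall e, smooth_on (Uof V) (lift_ux (W e)))
  (hgm : forall e f, smooth_on (Uof V) (lift_ux (gm e f)))
  (hm : forall i e, smooth_on (Uof V) (lift_ux (m i e)))
  (hminv : forall i e, smooth_on (Uof V) (lift_ux (minv i e)))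
  (hgpos : forall u x, V u x -> forall y : 'I_n -> R, (exists e, y e <> 0) ->
      0 < xsum (fun e => xsum (fun f => gm e f u x * y e * y f)))
  (hgm_m : forall u x, V u x -> forall e f,
      gm e f u x = xsum (fun i => m i e u x * m i f u x))
  (hm_inv : forall u x, V u x -> forall i j,
      xsum (fun e => m i e u x * minv j e u x) = if i == j then 1 else 0)
  (X : coord n -> point n -> R)
  (hXsmooth : forall a, smooth_on (Uof V) (X a))
  (hKilling : killing_on (Uof V) (gcomp H W gm) X)
  (hcausal : forall p, Uof V p -> gval H W gm p (fun a => X a p) (fun a => X a p) <= 0) :
  let X1 := fun p => gval H W gm p (fun a => X a p) (@lvec n) in
  exists c : R,
    (forall p, Uof V p -> X1 p = c) /\
    exists (F2 : R -> ('I_n -> R) -> R) (F : 'I_n -> R -> ('I_n -> R) -> R),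
      (forall p, Uof V p -> forall a,
         X a p = c * nvec H p a + F2 (p Cu) (xof p) * @lvec n a
                 + xsum (fun i => F i (p Cu) (xof p) * mvec W minv i p a)) /\
      (forall u x, V u x -> 2 * c * F2 u x + xsum (fun i => (F i u x) ^ 2) <= 0).
Proof.
move=> X1.
have [c hc] := Xu_constant hVopen hgpos hKilling hcausal hVconn.
pose Xat u x := fun a => X a (mkpt u x).
have Xat_p : forall p, Uof V p -> Xat (p Cu) (xof p) = fun a => X a p.
  move=> p hp; apply: functional_extensionality => a.
  by rewrite /Xat mkpt_upd (X_v_invariant hVopen hgpos hKilling hcausal hVconn _ _ hp).
exists c; split; first by move=> p hp; rewrite /X1 gval_lvec hc.
exists (fun u x => lcoeff H W (mkpt u x) (Xat u x)),
       (fun i u x => mcoeff m i (mkpt u x) (Xat u x)); split.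
- move=> p hp a; rewrite /= Xat_p // -(hc p hp).
  exact: (frame_decomposition H W (fun a => X a p) (hgpos _ _ hp) (hgm_m _ _ hp) (hm_inv _ _ hp)).
- move=> u x hux; have := hcausal (mkpt u x) hux.
  by rewrite (gval_frame H W (p := mkpt u x) _ (hgm_m _ _ hux)) /= (hc _ hux).
Qed.
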